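(* Let $f:\Omega^\infty\to\Omega$ be a finitary Boolean function. Then almost surely the pivotal set $\mathcal{P}(f)(\omega)$ is finite. If in addition $f$ is $1$-knowable, then the total influence is finite: $I(f)=\sum_{k\ge1} I_k(f)<\infty$.
   Context: Let $\Omega=\{-1,1\}$ and $\Omega^\infty=\{-1,1\}^{\mathbb N}$ with the uniform product probability measure; $\omega=(\omega_1,\omega_2,\dots)$ denotes a uniformly random element. A Boolean function is a (measurable) map $f:\Omega^\infty\to\Omega$. For $k\in\mathbb N$, $\omega^{(k)}$ denotes $\omega$ with bit $k$ flipped. The pivotal set is $\mathcal{P}(f)(\omega)=\{i\in\mathbb N: f(\omega^{(i)})\neq f(\omega)\}$; the influence of bit $k$ is $I_k(f)=\mathbb P(k\in\mathcal P(f)(\omega))$ and the total influence is $I(f)=\sum_k I_k(f)$. A set $W\subseteq\mathbb N$ is a witness set for $f$ at $\omega$ if there is an event $A$ with $\mathbb P(A)=1$ such that for all $\tilde\omega\in A$: if $\tilde\omega_i=\omega_i$ for all $i\in W$ then $f(\tilde\omega)=f(\omega)$. $f$ is finitary if almost surely there exists a finite witness set; then $W=W(f)(\omega)$ denotes the least finite witness set in the order: smaller maximum first, then smaller cardinality, then lexicographic. $f$ is $p$-knowable ($p>0$) if it is finitary and $\mathbb E[(\max W)^p]<\infty$. *)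

(* We build, from scratch, the outer measure
   of the uniform product (coin-tossing) measure on {-1,1}^N via countable
   covers by cylinder sets; "almost surely" means the exceptional set has
   outer measure 0, and probabilities of events are their outer measures
   (which coincide with the measure on measurable sets). *)
From Stdlib Require Import Reals Lra Lia List Classical ClassicalEpsilon.
Open Scope R_scope.

(* Omega^infty : bit i of the paper (i >= 1) is  w (i-1);  true = +1, false = -1 *)
Definition Omg := nat -> bool.

Definition BoolFun := Omg -> bool.

Definition event := Omg -> Prop.

Definition cyl (n : nat) (s : Omg) : event := fun w => forall i, (i < n)%nat -> w i = s i.

Definition covers (A : event) (ns : nat -> nat) (ss : nat -> Omg) : Prop :=
  forall w, A w -> exists k, cyl (ns k) (ss k) w.

Definition cover_cost (A : event) (c : R) : Prop :=
  exists ns ss, covers A ns ss /\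
    Un_cv (fun N => sum_f_R0 (fun k => (/2) ^ (ns k)) N) c.

Definition is_outer (A : event) (r : R) : Prop :=
  (forall c, cover_cost A c -> r <= c) /\
  (forall r', (forall c, cover_cost A c -> r' <= c) -> r' <= r).

Definition Pr (A : event) : R := epsilon (inhabits 0) (is_outer A).

Definition null (A : event) : Prop := Pr A = 0.

Definition as_ (P : event) : Prop := null (fun w => ~ P w).

Definition measurable (A : event) : Prop :=
  forall E, Pr E = Pr (fun w => E w /\ A w) + Pr (fun w => E w /\ ~ A w).

Definition measurable_fun (f : BoolFun) : Prop := measurable (fun w => f w = true).

Definition flip (k : nat) (w : Omg) : Omg :=
  fun i => if Nat.eqb i k then negb (w i) else w i.

Definition pivotal (f : BoolFun) (w : Omg) (i : nat) : Prop := f (flip i w) <> f w.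

Definition finite_set (S : nat -> Prop) : Prop :=
  exists l : list nat, forall i, S i -> In i l.

Definition influence (f : BoolFun) (k : nat) : R := Pr (fun w => pivotal f w k).

Definition total_influence_finite (f : BoolFun) : Prop :=
  exists M : R, forall N, sum_f_R0 (influence f) N <= M.

Definition witness (f : BoolFun) (w : Omg) (W : nat -> Prop) : Prop :=
  exists A : event, null (fun v => ~ A v) /\
    forall v, A v -> (forall i, W i -> v i = w i) -> f v = f w.

Definition has_finite_witness (f : BoolFun) (w : Omg) : Prop :=
  exists l : list nat, witness f w (fun i => In i l).

Definition finitary (f : BoolFun) : Prop := as_ (has_finite_witness f).

(* m bounds a finite witness set: there is a finite witness set all of whose
   (0-based) indices are < m, i.e. whose paper-indexed maximum is <= m *)
Definition witness_below (f : BoolFun) (w : Omg) (m : nat) : Prop :=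
  exists l : list nat, witness f w (fun i => In i l) /\ forall i, In i l -> (i < m)%nat.

(* max W(f)(w) in paper indexing (max of the empty set := 0): since the order
   defining W(f)(w) compares maxima first, this is the least possible maximum
   of a finite witness set. *)
Definition maxW (f : BoolFun) (w : Omg) : nat :=
  epsilon (inhabits 0%nat)
    (fun m => witness_below f w m /\ forall m', (m' < m)%nat -> ~ witness_below f w m').

(* E[(max W)^p] < infinity, for the nat-valued variable max W (the n = 0 term
   contributes 0 and is omitted) *)
Definition knowable (p : R) (f : BoolFun) : Prop :=
  finitary f /\
  exists M : R, forall N,
    sum_f_R0 (fun n => Rpower (INR (S n)) p * Pr (fun w => maxW f w = S n)) N <= M.

(* Let W be a finite witness set for f at w and let i be a pivotal bit
   outside W.  If the flipped configuration w^(i) had a finite witness set W'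
   too, the two witnesses would force the two different values f w and
   f w^(i) on almost every point of the cylinder that agrees with w on W and
   with w^(i) on W' -- impossible, because cylinders are not null.  Hence the
   pivotal set at w is contained in W(w), except when w or one of its
   countably many flips has no finite witness; flips preserve the measure, so
   this exceptional set is null.  The same inclusion shows that bit k is
   pivotal only if max W > k (up to a null set), so
   I(f) = sum_k I_k <= sum_k P(max W > k) = E[max W].

   We never need P(Omega) = 1:
      if the whole space is null the theorem holds trivially.
   3. Witnesses: two finite witnesses at configurations agreeing on the first
      witness set give the same value; consequences for pivotal bits.
   4. The two parts of the theorem. *)
From Stdlib Require Import Reals Lra Lia List Classical ClassicalEpsilon
  FunctionalExtensionality Cantor Wf_nat.
Open Scope R_scope.

(** * Real series *)

Lemma le_of_le_plus_eps (x y : R) : (forall eps, eps > 0 -> x <= y + eps) -> x <= y.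
Proof.
  intros H. destruct (Rle_or_lt x y) as [h|h]; auto.
  specialize (H ((x - y) / 2)). lra.
Qed.

Lemma halfpow_pos (n : nat) : 0 < (/2) ^ n.
Proof. apply pow_lt; lra. Qed.

Lemma geometric_sum (N : nat) : sum_f_R0 (fun k => (/2) ^ k) N = 2 - (/2) ^ N.
Proof. induction N; simpl; [lra|]. rewrite IHN. lra. Qed.

(* sum_{n <= N} eps 2^{-(n+1)} <= eps: the error budget of countable covers. *)
Lemma halved_budget_sum (eps : R) (N : nat) :
  0 <= eps -> sum_f_R0 (fun n => eps * (/2) ^ S n) N <= eps.
Proof.
  intros He.
  assert (E : sum_f_R0 (fun n => eps * (/2) ^ S n) N
              = eps / 2 * sum_f_R0 (fun k => (/2) ^ k) N).
  { induction N; [simpl; lra|]. rewrite !tech5, IHN. simpl. lra. }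
  rewrite E, geometric_sum. pose proof (halfpow_pos N). nra.
Qed.

Lemma partial_sums_growing (a : nat -> R) : (forall k, 0 <= a k) -> Un_growing (sum_f_R0 a).
Proof. intros H n. simpl. specialize (H (S n)). lra. Qed.

Lemma partial_sums_mono (a : nat -> R) (N N' : nat) :
  (forall k, 0 <= a k) -> (N <= N')%nat -> sum_f_R0 a N <= sum_f_R0 a N'.
Proof.
  intros H HN. induction HN; [lra|]. simpl. specialize (H (S m)). lra.
Qed.

Lemma limit_le_bound (u : nat -> R) (l c : R) : Un_cv u l -> (forall n, u n <= c) -> l <= c.
Proof.
  intros Hc Hb. destruct (Rle_or_lt l c) as [h|h]; auto.
  destruct (Hc (l - c)) as [N HN]; [lra|].
  specialize (HN N (Nat.le_refl _)). specialize (Hb N). unfold Rdist in HN.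
  apply Rabs_def2 in HN. lra.
Qed.

Lemma sum_nonpos (u : nat -> R) (N : nat) : (forall n, u n <= 0) -> sum_f_R0 u N <= 0.
Proof. intros H. induction N; simpl; [apply H|]. specialize (H (S N)). lra. Qed.

Lemma sum_swap (g : nat -> nat -> R) (K N : nat) :
  sum_f_R0 (fun k => sum_f_R0 (g k) N) K = sum_f_R0 (fun m => sum_f_R0 (fun k => g k m) K) N.
Proof.
  induction K; simpl; auto.
  rewrite IHK, <- sum_plus. apply sum_eq. intros; reflexivity.
Qed.

Lemma sum_of_series_bounds (x : nat -> R) (q : nat -> nat -> R) :
  (forall k m, 0 <= q k m) ->
  (forall k L, (forall N, sum_f_R0 (q k) N <= L) -> x k <= L) ->
  forall K eps, eps > 0 ->
  exists N, sum_f_R0 x K <= sum_f_R0 (fun k => sum_f_R0 (q k) N) K + eps.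
Proof.
  intros Hq Hx.
  assert (single : forall k eps, eps > 0 -> exists N, x k <= sum_f_R0 (q k) N + eps).
  { intros k eps He. apply NNPP. intros Hno.
    assert (x k <= x k - eps); [|lra].
    apply Hx. intros N. apply Rnot_lt_le. intros Hlt. apply Hno. exists N. lra. }
  induction K as [|K IH]; intros eps He.
  - destruct (single 0%nat eps He) as [N HN]. exists N. simpl. lra.
  - destruct (IH (eps / 2)) as [N1 H1]; [lra|].
    destruct (single (S K) (eps / 2)) as [N2 H2]; [lra|].
    exists (Nat.max N1 N2). simpl.
    assert (sum_f_R0 (fun k => sum_f_R0 (q k) N1) K
            <= sum_f_R0 (fun k => sum_f_R0 (q k) (Nat.max N1 N2)) K).
    { apply sum_Rle. intros. apply partial_sums_mono; auto; lia. }
    assert (sum_f_R0 (q (S K)) N2 <= sum_f_R0 (q (S K)) (Nat.max N1 N2)).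
    { apply partial_sums_mono; auto; lia. }
    lra.
Qed.

Lemma indicator_count (p : R) (m K : nat) : 0 <= p ->
  sum_f_R0 (fun k => if Nat.leb k m then p else 0) K <= INR (S m) * p.
Proof.
  intros Hp.
  assert (H : sum_f_R0 (fun k => if Nat.leb k m then p else 0) K <= INR (S (Nat.min K m)) * p).
  { induction K.
    - simpl. destruct (Nat.leb 0 m); simpl; lra.
    - rewrite tech5. destruct (Nat.leb (S K) m) eqn:E.
      + apply Nat.leb_le in E. replace (Nat.min (S K) m) with (S (Nat.min K m)) by lia.
        rewrite (S_INR (S _)). lra.
      + apply Nat.leb_gt in E. replace (Nat.min (S K) m) with (Nat.min K m) by lia. lra. }
  eapply Rle_trans; [exact H|]. apply Rmult_le_compat_r; auto. apply le_INR. lia.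
Qed.

(** Finite sums over lists of pairs, used to rearrange a double series along
    the Cantor enumeration of N x N. *)
Section PairSums.
Variable a : nat * nat -> R.

Fixpoint lsum (l : list (nat * nat)) : R :=
  match l with nil => 0 | x :: l => a x + lsum l end.

Lemma lsum_app (l1 l2 : list (nat * nat)) : lsum (l1 ++ l2) = lsum l1 + lsum l2.
Proof. induction l1; simpl; [lra|]. rewrite IHl1; lra. Qed.

Lemma lsum_seq_map (g : nat -> nat * nat) (J : nat) :
  lsum (map g (seq 0 (S J))) = sum_f_R0 (fun j => a (g j)) J.
Proof.
  induction J; [simpl; lra|].
  rewrite seq_S, map_app, lsum_app, IHJ, tech5. simpl. lra.
Qed.

Lemma list_prod_app (l1 l2 l' : list nat) :
  list_prod (l1 ++ l2) l' = list_prod l1 l' ++ list_prod l2 l'.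
Proof. induction l1; simpl; auto. rewrite IHl1, app_assoc. auto. Qed.

Lemma lsum_box (K : nat) :
  lsum (list_prod (seq 0 (S K)) (seq 0 (S K))) =
  sum_f_R0 (fun n => sum_f_R0 (fun m => a (n, m)) K) K.
Proof.
  assert (rows : forall K1 l2, lsum (list_prod (seq 0 (S K1)) l2) =
            sum_f_R0 (fun n => lsum (map (fun m => (n, m)) l2)) K1).
  { induction K1; intros l2; [simpl; rewrite app_nil_r; auto|].
    rewrite seq_S, list_prod_app, lsum_app, IHK1, tech5. simpl.
    rewrite app_nil_r. auto. }
  rewrite rows. apply sum_eq. intros n _. apply (lsum_seq_map (fun m => (n, m))).
Qed.

Hypothesis a_nonneg : forall x, 0 <= a x.

Lemma lsum_incl (l : list (nat * nat)) :
  NoDup l -> forall L, incl l L -> lsum l <= lsum L.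
Proof.
  assert (lsum_ge0 : forall l, 0 <= lsum l).
  { induction l0; simpl; [lra|]. pose proof (a_nonneg a0); lra. }
  induction l as [|x l IH]; intros Hnd L Hinc; simpl; [apply lsum_ge0|].
  inversion Hnd; subst.
  destruct (in_split x L) as (L1 & L2 & ->); [apply Hinc; left; auto|].
  assert (lsum l <= lsum (L1 ++ L2)).
  { apply IH; auto. intros y Hy.
    assert (In y (L1 ++ x :: L2)) as Hy' by (apply Hinc; right; auto).
    apply in_app_or in Hy'. apply in_or_app. destruct Hy' as [h|[h|h]]; auto.
    subst; contradiction. }
  rewrite lsum_app in *. simpl. lra.
Qed.

(* The first J+1 terms of the Cantor enumeration all lie in the box [0,J]^2. *)
Lemma cantor_sum_le_box (J : nat) :
  sum_f_R0 (fun j => a (of_nat j)) J <= sum_f_R0 (fun n => sum_f_R0 (fun m => a (n, m)) J) J.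
Proof.
  rewrite <- (lsum_seq_map of_nat), <- lsum_box. apply lsum_incl.
  - apply NoDup_map_inv with (f := to_nat). rewrite map_map.
    erewrite map_ext by (intros; apply cancel_to_of). rewrite map_id. apply seq_NoDup.
  - intros [n m] Hin. apply in_map_iff in Hin as (j & Hj & Hin). apply in_seq in Hin.
    pose proof (to_nat_non_decreasing (fst (of_nat j)) (snd (of_nat j))) as Hb.
    rewrite <- surjective_pairing, cancel_to_of, Hj in Hb. simpl in Hb.
    apply in_prod; apply in_seq; lia.
Qed.
End PairSums.

(** * The outer measure *)

Lemma cover_cost_ge0 (A : event) (c : R) : cover_cost A c -> 0 <= c.
Proof.
  intros (ns & ss & _ & Hc).
  pose proof (growing_ineq _ _
    (partial_sums_growing _ (fun k => Rlt_le _ _ (halfpow_pos (ns k)))) Hc 0%nat) as H.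
  simpl in H. pose proof (halfpow_pos (ns 0%nat)). lra.
Qed.

Lemma cover_cost_of_bounded (A : event) ns ss (c : R) :
  covers A ns ss -> (forall N, sum_f_R0 (fun k => (/2) ^ (ns k)) N <= c) ->
  exists l, cover_cost A l /\ l <= c.
Proof.
  intros Hcov Hb.
  destruct (growing_cv _ (partial_sums_growing _ (fun k => Rlt_le _ _ (halfpow_pos (ns k)))))
    as [l Hl].
  { exists c. intros x [i ->]. apply Hb. }
  exists l. split; [exists ns, ss; auto|]. eapply limit_le_bound; eauto.
Qed.

(* The infimum defining Pr exists (every set is covered by the whole space). *)
Lemma Pr_spec (A : event) : is_outer A (Pr A).
Proof.
  unfold Pr. apply epsilon_spec.
  set (E := fun x => exists c, cover_cost A c /\ x = - c).
  assert (HB : bound E).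
  { exists 0. intros x (c & Hc & ->). apply cover_cost_ge0 in Hc. lra. }
  assert (HE : exists x, E x).
  { destruct (cover_cost_of_bounded A (fun k => k) (fun _ _ => true) 2) as (l & Hl & _).
    - intros w _. exists 0%nat. intros i Hi. lia.
    - intros N. rewrite geometric_sum. pose proof (halfpow_pos N). lra.
    - exists (- l), l. auto. }
  destruct (completeness E HB HE) as [m [Hu Hl]].
  exists (- m). split.
  - intros c Hc. assert (E (- c)) as Hm by (exists c; auto). apply Hu in Hm. lra.
  - intros r' Hr'. assert (m <= - r'); [|lra].
    apply Hl. intros x (c & Hc & ->). apply Hr' in Hc. lra.
Qed.

Lemma Pr_ge0 (A : event) : 0 <= Pr A.
Proof. apply (proj2 (Pr_spec A)). apply cover_cost_ge0. Qed.

Lemma Pr_le_cover (A : event) ns ss (c : R) :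
  covers A ns ss -> (forall N, sum_f_R0 (fun k => (/2) ^ (ns k)) N <= c) -> Pr A <= c.
Proof.
  intros H1 H2. destruct (cover_cost_of_bounded _ _ _ _ H1 H2) as (l & Hl & Hlc).
  apply (proj1 (Pr_spec A)) in Hl. lra.
Qed.

Lemma Pr_approx (A : event) (eps : R) : eps > 0 -> exists ns ss, covers A ns ss /\
  forall N, sum_f_R0 (fun k => (/2) ^ (ns k)) N <= Pr A + eps.
Proof.
  intros He.
  destruct (classic (exists c, cover_cost A c /\ c < Pr A + eps))
    as [(c & (ns & ss & Hcov & Hc) & Hlt)|Hn].
  - exists ns, ss. split; auto. intros N.
    pose proof (growing_ineq _ _
      (partial_sums_growing _ (fun k => Rlt_le _ _ (halfpow_pos (ns k)))) Hc N). lra.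
  - exfalso. assert (Pr A + eps <= Pr A); [|lra].
    apply (proj2 (Pr_spec A)). intros c Hc. apply Rnot_lt_le. intros Hlt. eauto.
Qed.

Lemma Pr_mono (A B : event) : (forall w, A w -> B w) -> Pr A <= Pr B.
Proof.
  intros H. apply le_of_le_plus_eps. intros eps He.
  destruct (Pr_approx B eps He) as (ns & ss & Hc & Hb).
  apply (Pr_le_cover A ns ss); auto. intros w Hw; apply Hc; auto.
Qed.

Lemma null_of_le0 (A : event) : Pr A <= 0 -> null A.
Proof. intros H. pose proof (Pr_ge0 A). unfold null. lra. Qed.

Lemma null_mono (A B : event) : null A -> (forall w, B w -> A w) -> null B.
Proof. intros H Hs. apply null_of_le0. rewrite <- H. apply Pr_mono; auto. Qed.

(* Countable subadditivity: glue eps 2^{-(n+1)}-optimal covers of the A n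
   along the Cantor enumeration of N x N. *)
Lemma Pr_countable_union (A : nat -> event) (L : R) :
  (forall N, sum_f_R0 (fun n => Pr (A n)) N <= L) -> Pr (fun w => exists n, A n w) <= L.
Proof.
  intros HL. apply le_of_le_plus_eps. intros eps He.
  assert (good_cover : forall n, exists p : (nat -> nat) * (nat -> Omg),
     covers (A n) (fst p) (snd p) /\
     forall N, sum_f_R0 (fun k => (/2) ^ (fst p k)) N <= Pr (A n) + eps * (/2) ^ (S n)).
  { intros n. destruct (Pr_approx (A n) (eps * (/2) ^ (S n))) as (ns & ss & H1 & H2).
    { pose proof (halfpow_pos (S n)). nra. }
    exists (ns, ss); auto. }
  destruct (choice _ good_cover) as [g Hg].
  apply (Pr_le_cover _ (fun j => fst (g (fst (of_nat j))) (snd (of_nat j)))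
                       (fun j => snd (g (fst (of_nat j))) (snd (of_nat j)))).
  - intros w [n Hw]. destruct (proj1 (Hg n) w Hw) as [m Hm].
    exists (to_nat (n, m)). rewrite cancel_of_to. auto.
  - intros J. eapply Rle_trans.
    { apply (cantor_sum_le_box (fun p => (/2) ^ (fst (g (fst p)) (snd p)))).
      intros; left; apply halfpow_pos. }
    simpl. eapply Rle_trans; [apply sum_Rle; intros n _; apply (proj2 (Hg n))|].
    rewrite sum_plus. pose proof (HL J). pose proof (halved_budget_sum eps J). lra.
Qed.

Lemma Pr_union_nulls (X : event) (Ns : nat -> event) :
  (forall n, null (Ns n)) -> Pr (fun w => X w \/ exists n, Ns n w) <= Pr X.
Proof.
  intros Hn.
  set (A := fun n => match n with O => X | S k => Ns k end).
  eapply Rle_trans; [apply (Pr_mono _ (fun w => exists n, A n w))|].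
  - intros w [h|[n h]]; [exists O|exists (S n)]; auto.
  - apply Pr_countable_union. intros [|N]; [simpl; lra|].
    rewrite decomp_sum by lia. simpl.
    assert (sum_f_R0 (fun i => Pr (Ns i)) N <= 0).
    { apply sum_nonpos. intros; rewrite (Hn n); lra. }
    lra.
Qed.

Definition xorw (d w : Omg) : Omg := fun j => xorb (w j) (d j).

Lemma Pr_translate (B : event) (d : Omg) : Pr (fun w => B (xorw d w)) <= Pr B.
Proof.
  apply le_of_le_plus_eps. intros eps He.
  destruct (Pr_approx B eps He) as (ns & ss & Hc & Hb).
  apply (Pr_le_cover _ ns (fun k => xorw d (ss k))); auto.
  intros w Hw. destruct (Hc _ Hw) as [k Hk]. exists k. intros i Hi.
  specialize (Hk i Hi). unfold xorw in *. rewrite <- Hk. destruct (w i), (d i); reflexivity.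
Qed.

Lemma Pr_flip (B : event) (i : nat) : Pr (fun w => B (flip i w)) <= Pr B.
Proof.
  eapply Rle_trans; [|apply (Pr_translate B (fun j => Nat.eqb j i))].
  apply Pr_mono. intros w Hw.
  replace (xorw (fun j => Nat.eqb j i) w) with (flip i w); auto.
  apply functional_extensionality; intros j. unfold flip, xorw.
  destruct (Nat.eqb j i), (w j); reflexivity.
Qed.

Lemma null_flip (B : event) (i : nat) : null B -> null (fun w => B (flip i w)).
Proof. intros H. apply null_of_le0. rewrite <- H. apply Pr_flip. Qed.

(* If some cylinder is null then the whole space is: the cylinder of length n
   is covered by that of length n+1 and its translate flipping bit n. *)
Lemma null_cylinder_degenerate (n : nat) (s : Omg) : null (cyl n s) -> null (fun _ => True).
Proof.
  revert s. induction n; intros s H.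
  - eapply null_mono; eauto. intros w _ i Hi; lia.
  - apply (IHn s). apply null_of_le0.
    set (d := fun j => Nat.eqb j n).
    eapply Rle_trans; [apply (Pr_mono _ (fun w => cyl (S n) s w \/
                                              exists k : nat, cyl (S n) s (xorw d w)))|].
    + intros w Hw. destruct (Bool.bool_dec (w n) (s n)) as [e|e].
      * left. intros i Hi. destruct (Nat.eq_dec i n); subst; auto. apply Hw; lia.
      * right. exists O. intros i Hi. unfold xorw, d. destruct (Nat.eq_dec i n) as [->|ne].
        -- rewrite Nat.eqb_refl. destruct (w n), (s n); simpl in *; congruence.
        -- rewrite (proj2 (Nat.eqb_neq i n) ne), Bool.xorb_false_r. apply Hw; lia.
    + rewrite Pr_union_nulls; [rewrite H; lra|].
      intros _. apply null_of_le0. rewrite <- H. apply Pr_translate.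
Qed.

(** * Witnesses and pivotal bits *)

Lemma list_bound (l : list nat) : exists K, forall i, In i l -> (i < K)%nat.
Proof.
  induction l as [|x l [K HK]]; [exists O; intros i []|].
  exists (S (Nat.max x K)). intros i [->|Hi]; [lia|]. specialize (HK i Hi); lia.
Qed.

Section Witnesses.
Variable f : BoolFun.
Hypothesis nondegenerate : ~ null (fun _ => True).

(* Finite witnesses at w and v force f v = f w as soon as v agrees with w on
   the witness set of w: otherwise the cylinder fixing both witness sets is
   covered by the two exceptional null sets. *)
Lemma witnesses_agree (w v : Omg) (lw lv : list nat) :
  witness f w (fun i => In i lw) -> witness f v (fun i => In i lv) ->
  (forall i, In i lw -> v i = w i) -> f v = f w.
Proof.
  intros (Aw & Nw & Hw) (Av & Nv & Hv) Hag.
  destruct (Bool.bool_dec (f v) (f w)) as [e|ne]; auto. exfalso.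
  destruct (list_bound (lw ++ lv)) as [K HK].
  set (s := fun j => if in_dec Nat.eq_dec j lw then w j else v j).
  apply nondegenerate, (null_cylinder_degenerate K s), null_of_le0.
  rewrite <- Nw. eapply Rle_trans; [|apply (Pr_union_nulls _ (fun _ u => ~ Av u))].
  - apply Pr_mono. intros u Hu.
    destruct (classic (Aw u)) as [a1|a1]; auto.
    destruct (classic (Av u)) as [a2|a2]; [|right; exists O; auto].
    exfalso. apply ne.
    assert (E1 : f u = f w).
    { apply Hw; auto. intros i Hi. rewrite Hu by (apply HK, in_or_app; auto).
      unfold s. destruct (in_dec Nat.eq_dec i lw); tauto. }
    assert (E2 : f u = f v).
    { apply Hv; auto. intros i Hi. rewrite Hu by (apply HK, in_or_app; auto).
      unfold s. destruct (in_dec Nat.eq_dec i lw); [symmetry|]; auto. }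
    congruence.
  - intros _. exact Nv.
Qed.

Lemma pivotal_outside_witness (w : Omg) (l : list nat) (i : nat) :
  witness f w (fun j => In j l) -> ~ In i l -> pivotal f w i ->
  ~ has_finite_witness f (flip i w).
Proof.
  intros Hw Hi Hp [lv Hv]. apply Hp. eapply witnesses_agree; eauto.
  intros j Hj. unfold flip. destruct (Nat.eqb_spec j i); subst; tauto.
Qed.
End Witnesses.

Lemma least_element (P : nat -> Prop) (n : nat) :
  P n -> exists m, P m /\ forall m', (m' < m)%nat -> ~ P m'.
Proof.
  induction n as [n IH] using lt_wf_ind. intros Hn.
  destruct (classic (exists m', (m' < n)%nat /\ P m')) as [(m' & h1 & h2)|Hno].
  - exact (IH m' h1 h2).
  - exists n. split; auto. intros m' h1 h2. apply Hno; eauto.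
Qed.

Lemma maxW_spec (f : BoolFun) (w : Omg) :
  has_finite_witness f w -> witness_below f w (maxW f w).
Proof.
  intros [l Hl]. unfold maxW.
  destruct (list_bound l) as [K HK].
  assert (below_K : witness_below f w K) by (exists l; auto).
  exact (proj1 (epsilon_spec (inhabits 0%nat) _ (least_element _ K below_K))).
Qed.

Section Finitary.
Variable f : BoolFun.
Hypothesis nondegenerate : ~ null (fun _ => True).
Hypothesis finitary_f : finitary f.

Lemma null_no_witness_flip (i : nat) :
  null (fun w => ~ has_finite_witness f (flip i w)).
Proof. apply (null_flip (fun w => ~ has_finite_witness f w)), finitary_f. Qed.

Lemma pivotal_set_finite_as : as_ (fun w => finite_set (pivotal f w)).
Proof.
  apply null_of_le0. rewrite <- finitary_f.
  eapply Rle_trans; [|apply (Pr_union_nulls _ _ null_no_witness_flip)].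
  apply Pr_mono. intros w Hw.
  destruct (classic (has_finite_witness f w)) as [[l Hl]|h]; [|left; auto].
  right. apply NNPP. intros Hno. apply Hw. exists l. intros i Hi.
  apply NNPP. intros Hni. apply Hno. exists i.
  eapply pivotal_outside_witness; eauto.
Qed.

Lemma influence_le_tail (k : nat) :
  influence f k <= Pr (fun w => exists m, (k <= m)%nat /\ maxW f w = S m).
Proof.
  eapply Rle_trans; [|apply (Pr_union_nulls _ (fun n w => match n with
      | O => ~ has_finite_witness f w
      | S _ => ~ has_finite_witness f (flip k w) end))].
  - apply Pr_mono. intros w Hp.
    destruct (classic (has_finite_witness f w)) as [Hw|h]; [|right; exists O; auto].
    destruct (classic (has_finite_witness f (flip k w))) as [Hv|h];
      [|right; exists 1%nat; auto].
    left. destruct (maxW_spec f w Hw) as (l & Hl & Hlt).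
    destruct (classic (In k l)) as [Hk|Hk].
    + specialize (Hlt k Hk). exists (pred (maxW f w)). split; lia.
    + exfalso. eapply pivotal_outside_witness; eauto.
  - intros [|n]; [apply finitary_f|apply null_no_witness_flip].
Qed.

(* The mass of {max W = m+1}, counted for the bits k <= m it may make pivotal. *)
Definition tail_term (k m : nat) : R :=
  if Nat.leb k m then Pr (fun w => maxW f w = S m) else 0.

Lemma influence_le_series (k : nat) (L : R) :
  (forall N, sum_f_R0 (tail_term k) N <= L) -> influence f k <= L.
Proof.
  intros HL. eapply Rle_trans; [apply influence_le_tail|].
  apply (Pr_countable_union (fun m w => (k <= m)%nat /\ maxW f w = S m)).
  intros N. eapply Rle_trans; [|apply (HL N)].
  apply sum_Rle. intros m _. unfold tail_term. destruct (Nat.leb k m) eqn:E.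
  - apply Pr_mono. intros w [_ h]; auto.
  - apply Nat.leb_gt in E. rewrite <- finitary_f. apply Pr_mono. intros w [h _]. lia.
Qed.

Lemma total_influence_bounded : knowable 1 f -> total_influence_finite f.
Proof.
  intros [_ [M HM]]. exists M. intros K. apply le_of_le_plus_eps. intros eps He.
  assert (tail_term_ge0 : forall k m, 0 <= tail_term k m).
  { intros k m. unfold tail_term. destruct (Nat.leb k m); [apply Pr_ge0|lra]. }
  destruct (sum_of_series_bounds _ _ tail_term_ge0 influence_le_series K eps He) as [N HN].
  assert (sum_f_R0 (fun k => sum_f_R0 (tail_term k) N) K <= M); [|lra].
  rewrite sum_swap. eapply Rle_trans; [|apply (HM N)].
  apply sum_Rle. intros m _. rewrite Rpower_1 by (apply lt_0_INR; lia).
  apply indicator_count, Pr_ge0.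
Qed.
End Finitary.

Theorem mainTheorem1 (f : BoolFun) :
  measurable_fun f ->
  finitary f ->
  as_ (fun w => finite_set (pivotal f w)) /\
  (knowable 1 f -> total_influence_finite f).
Proof.
  intros _ Hfin. destruct (classic (null (fun _ => True))) as [Hnull|Hnondeg].
  - assert (all_null : forall A, Pr A = 0) by (intros A; apply (null_mono _ A Hnull); auto).
    split; [apply all_null|].
    intros _. exists 0. intros N. apply sum_nonpos. intros k. unfold influence.
    rewrite all_null; lra.
  - split; [apply pivotal_set_finite_as | apply total_influence_bounded]; auto.
Qed.
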